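(* Let $d\geq 1$ and let $\sigma=(s_d,s_{d-1},\ldots,s_0)$ be any sequence of signs $s_j\in\{+,-\}$ with $s_d=+$. If $d$ is even and $s_0=+$ (resp. $s_0=-$), then there exists a real polynomial $P=\sum_{j=0}^d a_jx^j$ of degree $d$ with all $a_j\neq 0$ and $\operatorname{sgn} a_j=s_j$ for all $j$, which has exactly $0$ positive and $0$ negative roots (resp. exactly $1$ positive and $1$ negative root). If $d$ is odd and $s_0=+$ (resp. $s_0=-$), then there exists such a polynomial $P$ with sign pattern $\sigma$ having exactly $0$ positive and $1$ negative root (resp. exactly $1$ positive and $0$ negative roots).
   Context: A real polynomial $P=\sum_{j=0}^d a_jx^j$ of degree $d$ with all coefficients nonzero is said to define the sign pattern $\sigma=(s_d,\ldots,s_0)$ if $s_j=\operatorname{sgn}a_j$ for all $j$. A pair $(pos,neg)$ is realized for $\sigma$ by $P$ if $P$ defines $\sigma$ and has exactly $pos$ positive and exactly $neg$ negative real roots. *)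

From HB Require Import structures.
From mathcomp Require Import all_boot all_order all_algebra.
From mathcomp Require Import reals.
Set Implicit Arguments. Unset Strict Implicit. Unset Printing Implicit Defensive.
Import Order.TTheory GRing.Theory Num.Theory.
Local Open Scope ring_scope.

(* A sign pattern of length d+1: s j = true means "+", false means "-",
   for j = 0..d (s j is the sign of the coefficient of x^j). *)

Definition defines_sign_pattern (R : realType) (d : nat) (s : 'I_d.+1 -> bool)
    (P : {poly R}) : Prop :=
  size P = d.+1 /\
  forall j : 'I_d.+1, P`_j != 0 /\ (0 < P`_j) = s j.

Definition num_roots_in (R : realType) (A : R -> bool) (P : {poly R}) (n : nat)
    : Prop :=
  P != 0 /\
  exists rs : seq R, uniq rs /\
    (forall x : R, (x \in rs) <-> (A x /\ root P x)) /\
    (\sum_(x <- rs) mup x P)%N = n.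

Definition num_pos_roots (R : realType) (P : {poly R}) (n : nat) : Prop :=
  num_roots_in (fun x : R => 0 < x) P n.
Definition num_neg_roots (R : realType) (P : {poly R}) (n : nat) : Prop :=
  num_roots_in (fun x : R => x < 0) P n.

Definition realizes (R : realType) (d : nat) (s : 'I_d.+1 -> bool)
    (P : {poly R}) (pos neg : nat) : Prop :=
  defines_sign_pattern s P /\ num_pos_roots P pos /\ num_neg_roots P neg.

(* Give P the prescribed signs, with coefficients +-1 in degrees 0 and d and
   +-eps in between, for eps small with respect to d.  On the positive axis
   such a P behaves like x^d + a_0: if a_0 = 1 it has no positive root; if
   a_0 = -1 it is negative on (0, 1/2], positive at 2 and increasing on
   [1/2, +oo), so it has exactly one positive root, and that root is simple.
   The negative roots of P are the positive roots of (-1)^d P(-x), which has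
   the same shape with constant term (-1)^d a_0; the parity of d then yields
   the four cases. *)

From HB Require Import structures.
From mathcomp Require Import all_boot all_order all_algebra.
From mathcomp Require Import reals polyrcf.
From mathcomp Require Import lra.

Set Implicit Arguments. Unset Strict Implicit. Unset Printing Implicit Defensive.
Import Order.TTheory GRing.Theory Num.Theory.
Local Open Scope ring_scope.

Lemma coef_comp_polyNX (R : comNzRingType) (p : {poly R}) i :
  (p \Po -'X)`_i = (-1) ^+ i * p`_i.
Proof.
elim/poly_ind: p i => [|p c IHp] [|i]; rewrite ?comp_poly0 ?coef0 ?mulr0 //.
  by rewrite comp_poly_MXaddC !coefD !coefC mulrN coefN !coefMX /= oppr0 expr0 mul1r.
rewrite comp_poly_MXaddC !coefD !coefC mulrN coefN !coefMX /= !addr0 IHp.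
by rewrite exprS mulN1r mulNr.
Qed.

Lemma comp_polyNXK (R : comNzRingType) (p : {poly R}) : p \Po -'X \Po -'X = p.
Proof. by rewrite -comp_polyA raddfN /= comp_polyX opprK comp_polyXr. Qed.

Lemma comp_polyNX_exp_XsubC (R : comNzRingType) (a : R) k :
  ('X - a%:P) ^+ k \Po -'X = (-1) ^+ k *: ('X - (- a)%:P) ^+ k.
Proof.
rewrite rmorphXn /= raddfB /= comp_polyX comp_polyC.
by rewrite -exprZn scaleN1r polyCN opprK opprD.
Qed.

Lemma eq_mup (R : fieldType) x y (p q : {poly R}) : p != 0 -> q != 0 ->
  (forall k, (('X - x%:P) ^+ k %| p) = (('X - y%:P) ^+ k %| q)) ->
  mup x p = mup y q.
Proof.
move=> p0 q0 dvd; apply/eqP; rewrite eqn_leq.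
rewrite (mup_geq _ _ q0) -dvd -(mup_geq _ _ p0) leqnn /=.
by rewrite (mup_geq _ _ p0) dvd -(mup_geq _ _ q0).
Qed.

Lemma mupZ (R : fieldType) x c (p : {poly R}) : c != 0 -> mup x (c *: p) = mup x p.
Proof.
have [->|p0 c0] := eqVneq p 0; first by rewrite scaler0.
by apply: (eq_mup (p := c *: p)) => // [|k]; rewrite ?scaler_eq0 ?negb_or ?c0 ?dvdpZr.
Qed.

Lemma mup_comp_polyNX (R : fieldType) x (p : {poly R}) :
  p != 0 -> mup x (p \Po -'X) = mup (- x) p.
Proof.
move=> p0; have pN0 : p \Po -'X != 0.
  by rewrite comp_poly2_eq0 // size_opp size_polyX.
apply: eq_mup => // k; apply/idP/idP => /(dvdp_comp_poly (-'X)).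
  by rewrite comp_polyNXK comp_polyNX_exp_XsubC dvdpZl ?signr_eq0.
by rewrite comp_polyNX_exp_XsubC opprK dvdpZl ?signr_eq0.
Qed.

Lemma mup_simple_root (R : fieldType) x (p : {poly R}) :
  root p x -> p^`().[x] != 0 -> mup x p = 1%N.
Proof.
move=> px p'x; have p0 : p != 0 by apply: contra p'x => /eqP->; rewrite deriv0 horner0.
apply/eqP; rewrite eqn_leq -XsubC_dvd // dvdp_XsubCl px andbT mup_leq //.
apply: contra p'x => /dvdpP [q ->].
by rewrite !derivE !hornerE subrr /= !mulr0 add0r addrK mulr0.
Qed.

Section RootCounting.

Variable R : realType.
Implicit Types (A : R -> bool) (p : {poly R}).

Lemma num_roots_in0 A p :
  p != 0 -> (forall x, A x -> ~~ root p x) -> num_roots_in A p 0.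
Proof.
move=> p0 noroot; split=> //; exists [::]; split=> //; split; last by rewrite big_nil.
by move=> x; split=> // -[/noroot/negP].
Qed.

Lemma num_roots_in1 A p r : A r -> p^`().[r] != 0 ->
  (forall x, A x -> root p x = (x == r)) -> num_roots_in A p 1.
Proof.
move=> Ar p'r rootAp; have pr : root p r by rewrite rootAp ?eqxx.
split; first by apply: contra p'r => /eqP->; rewrite deriv0 horner0.
exists [:: r]; split=> //; split; last by rewrite big_seq1 mup_simple_root.
by move=> x; rewrite inE; split=> [/eqP->|[Ax]] //; rewrite rootAp.
Qed.

Lemma num_roots_inZ A c p n :
  c != 0 -> num_roots_in A (c *: p) n -> num_roots_in A p n.
Proof.
move=> c0 [cp0 [rs [urs [rsP <-]]]].
split; first by apply: contra cp0 => /eqP->; rewrite scaler0.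
exists rs; split=> //; split=> [x|]; first by rewrite rsP rootZ.
by apply: eq_bigr => x _; rewrite mupZ.
Qed.

Lemma num_neg_roots_comp_polyNX p n :
  num_pos_roots (p \Po -'X) n -> num_neg_roots p n.
Proof.
move=> [q0 [rs [urs [rsP <-]]]].
have p0 : p != 0 by apply: contra q0 => /eqP->; rewrite comp_poly0.
split=> //; exists (map -%R rs); split; first by rewrite (map_inj_uniq oppr_inj).
split=> [x|]; last by rewrite big_map; apply: eq_bigr => y _; rewrite mup_comp_polyNX.
rewrite -{1}[x]opprK (mem_map oppr_inj) rsP oppr_gt0.
by rewrite /root horner_comp hornerN hornerX opprK.
Qed.

End RootCounting.

Lemma exprn_le1D (R : realDomainType) (x : R) i k :
  0 <= x -> (i <= k)%N -> x ^+ i <= 1 + x ^+ k.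
Proof.
move=> x_ge0 ik; have [x_le1|x_gt1] := lerP x 1.
  by rewrite (le_trans (exprn_ile1 _ x_ge0 x_le1)) // lerDl exprn_ge0.
by rewrite (le_trans (ler_weXn2l (ltW x_gt1) ik)) // lerDr.
Qed.

Lemma exprn_le_pow2M (R : realFieldType) (x : R) i k :
  1 / 2 <= x -> (i <= k)%N -> x ^+ i <= 2 ^+ k * x ^+ k.
Proof.
move=> x_ge ik; rewrite -exprMn; apply: le_trans (ler_weXn2l _ ik); last lra.
by rewrite exprMn ler_peMl ?exprn_ge0 ?exprn_ege1 //; lra.
Qed.

Lemma ler_norm_sum_const (R : numDomainType) n (F : 'I_n -> R) B :
  (forall i, `|F i| <= B) -> `|\sum_(i < n) F i| <= n%:R * B.
Proof.
move=> FB; apply: le_trans (ler_norm_sum _ _ _) _.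
have -> : n%:R * B = \sum_(i < n) B by rewrite sumr_const card_ord mulr_natl.
exact: ler_sum.
Qed.

Definition small_middle_coefs (R : numDomainType) n (eps : R) (p : {poly R}) :=
  [/\ size p = n.+2, p \is monic & forall i, (i < n)%N -> `|p`_i.+1| <= eps].

Section SmallMiddleCoefs.

Variables (R : rcfType) (n : nat) (eps : R) (p : {poly R}).
(* The factor 2^(n+2) pays for x^i <= 2^n x^n on [1/2, +oo), which lets the
   leading term of p^`() dominate there. *)
Hypotheses (eps_ge0 : 0 <= eps) (eps_small : n.+1%:R * 2 ^+ n.+2 * eps <= 1).
Hypothesis p_small : small_middle_coefs n eps p.

Let weight_eps : n.+1%:R * 2 ^+ n * eps <= 1 / 4.
Proof. by move: eps_small; rewrite !exprS; lra. Qed.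

Let count_eps : n%:R * eps <= 1 / 4.
Proof.
have n_le : n%:R <= n.+1%:R :> R by rewrite ler_nat.
have pow_ge1 : 1 <= 2 ^+ n :> R by rewrite exprn_ege1 //; lra.
have := ler_wpM2r eps_ge0 n_le.
have := ler_wpM2l (mulr_ge0 (ler0n _ n.+1) eps_ge0) pow_ge1.
have := weight_eps; lra.
Qed.

Let lead_p : p`_n.+1 = 1.
Proof. by case: p_small => size_p /monicP; rewrite lead_coefE size_p. Qed.

Let middle x := \sum_(i < n) p`_i.+1 * x ^+ i.+1.

Lemma horner_middle x : p.[x] = p`_0 + middle x + x ^+ n.+1.
Proof.
case: p_small => size_p _ _.
by rewrite horner_coef size_p big_ord_recr big_ord_recl /= lead_p mul1r expr0 mulr1.
Qed.

Lemma norm_middle_le x M : 0 <= x -> 0 <= M ->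
  (forall i, (i < n)%N -> x ^+ i.+1 <= M) -> `|middle x| <= M / 4.
Proof.
case: p_small => _ _ middle_p x_ge0 M_ge0 xM.
apply: le_trans (ler_norm_sum_const (B := eps * M) _) _ => [i|].
  by rewrite normrM (ger0_norm (exprn_ge0 _ x_ge0)) ler_pM ?exprn_ge0 ?middle_p ?xM.
by rewrite mulrA; apply: le_trans (ler_wpM2r M_ge0 count_eps) _; lra.
Qed.

Lemma horner_lower_bound x : 0 <= x -> p`_0 - 1 / 4 + 3 / 4 * x ^+ n.+1 <= p.[x].
Proof.
move=> x_ge0; have pow_ge0 := exprn_ge0 n.+1 x_ge0.
have := norm_middle_le x_ge0 (addr_ge0 ler01 pow_ge0)
          (fun i lt_in => exprn_le1D (i := i.+1) (k := n.+1) x_ge0 (ltnW lt_in)).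
by rewrite horner_middle ler_norml => /andP[]; lra.
Qed.

Lemma horner_upper_bound x : 0 <= x <= 1 -> p.[x] <= p`_0 + 5 / 4 * x.
Proof.
move=> /andP[x_ge0 x_le1].
have pow_le i : x ^+ i.+1 <= x by rewrite exprS ler_piMr ?exprn_ile1.
have := norm_middle_le x_ge0 x_ge0 (fun i _ => pow_le i).
by rewrite horner_middle ler_norml => /andP[]; have := pow_le n; lra.
Qed.

Let dmiddle x := \sum_(i < n) p`_i.+1 *+ i.+1 * x ^+ i.

Lemma horner_deriv_middle x : p^`().[x] = dmiddle x + n.+1%:R * x ^+ n.
Proof.
have p0 : p != 0 by case: p_small => _ /monic_neq0.
have size_p' : (size p^`() <= n.+1)%N.
  by case: p_small (lt_size_deriv p0) => ->.
rewrite (horner_coef_wide _ size_p') big_ord_recr /= coef_deriv lead_p.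
by rewrite mulr_natl; congr (_ + _); apply: eq_bigr => i _; rewrite coef_deriv.
Qed.

Lemma deriv_gt0 x : 1 / 2 <= x -> 0 < p^`().[x].
Proof.
case: p_small => _ _ middle_p x_ge.
have pow_gt0 : 0 < x ^+ n by rewrite exprn_gt0 //; lra.
have term_le (i : 'I_n) :
    `|p`_i.+1 *+ i.+1 * x ^+ i| <= n.+1%:R * 2 ^+ n * eps * x ^+ n.
  have coef_le : `|p`_i.+1| *+ i.+1 <= eps * n.+1%:R.
    by rewrite -[`|_| *+ _]mulr_natr ler_pM ?ler_nat ?middle_p // leqW.
  have pow_le := exprn_le_pow2M x_ge (ltnW (ltn_ord i)).
  have := ler_pM (mulrn_wge0 _ (normr_ge0 _)) (exprn_ge0 _ (le_trans _ x_ge))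
            coef_le pow_le.
  rewrite normrM normrMn (ger0_norm (exprn_ge0 _ _)); lra.
have nWy_le := ler_wpM2l (ler0n _ n) (ler_wpM2r (ltW pow_gt0) weight_eps).
have ny_ge0 := mulr_ge0 (ler0n R n) (ltW pow_gt0).
have := ler_norm_sum_const term_le.
rewrite -/(dmiddle x) ler_norml => /andP[dm_lo dm_hi].
rewrite horner_deriv_middle -natr1; lra.
Qed.

Lemma unique_pos_root : p`_0 = -1 ->
  exists r, [/\ 0 < r, p^`().[r] != 0 & forall x, 0 < x -> root p x = (x == r)].
Proof.
move=> p0_eq.
have neg_near0 x : 0 <= x -> x <= 1 / 2 -> p.[x] < 0.
  by move=> x_ge0 x_le; have := @horner_upper_bound x; rewrite p0_eq x_ge0 /=; lra.
have p_half : p.[1 / 2] < 0 by apply: neg_near0; lra.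
have p_two : 0 < p.[2].
  have pow_ge1 : 1 <= 2 ^+ n :> R by rewrite exprn_ege1 // ler1n.
  have := @horner_lower_bound 2; rewrite p0_eq exprS; lra.
have [r /andP[r_ge r_le] pr] : exists2 r, 1 / 2 <= r <= 2 & root p r.
  by apply: poly_ivt; rewrite ?ltW //; lra.
exists r; split; [lra | by rewrite gt_eqF ?deriv_gt0 |].
move=> x x_gt0; apply/idP/eqP => [px|->//].
have x_ge : 1 / 2 < x.
  rewrite ltNge; apply: contraTN px => x_le.
  by rewrite /root lt_eqF // neg_near0 // ltW.
apply: (derp_inj (a := 1 / 2) (b := x + r)).
- by move=> y; rewrite in_itv /= => /andP[y_gt _]; apply: deriv_gt0; lra.
- by rewrite in_itv /=; apply/andP; split; lra.
- by rewrite in_itv /=; apply/andP; split; lra.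
by rewrite (rootP px) (rootP pr).
Qed.

End SmallMiddleCoefs.

Lemma small_middle_coefs_reflect (R : numDomainType) n (eps : R) (p : {poly R}) :
  small_middle_coefs n eps p ->
  small_middle_coefs n eps ((-1) ^+ n.+1 *: (p \Po -'X)).
Proof.
case=> size_p /monicP lead_p middle_p.
have size_q : size ((-1) ^+ n.+1 *: (p \Po -'X)) = n.+2.
  by rewrite size_scale ?signr_eq0 // size_comp_poly2 // size_opp size_polyX.
split=> // [|i lt_in]; last first.
  by rewrite coefZ coef_comp_polyNX !normrM !normr_sign !mul1r middle_p.
rewrite monicE lead_coefE size_q coefZ coef_comp_polyNX signrMK.
by rewrite -size_p -lead_coefE lead_p.
Qed.

Lemma num_pos_roots_small_middle (R : realType) n (eps : R) (p : {poly R}) (b : bool) :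
  0 <= eps -> n.+1%:R * 2 ^+ n.+2 * eps <= 1 -> small_middle_coefs n eps p ->
  p`_0 = (-1) ^+ b -> num_pos_roots p b.
Proof.
move=> eps_ge0 eps_small p_small; case: b => p0_eq.
  have [r [r_gt0 p'r rootp]] := unique_pos_root eps_ge0 eps_small p_small p0_eq.
  exact: num_roots_in1 r_gt0 p'r rootp.
have p_neq0 : p != 0 by case: p_small => _ /monic_neq0.
apply: num_roots_in0 p_neq0 _ => x x_gt0; rewrite /root gt_eqF //.
have := horner_lower_bound eps_ge0 eps_small p_small (ltW x_gt0).
have := exprn_ge0 n.+1 (ltW x_gt0); rewrite p0_eq expr0; lra.
Qed.

Definition sign_pattern_poly (R : nzRingType) d (s : 'I_d.+1 -> bool) (eps : R) :=
  \poly_(i < d.+1)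
    ((-1) ^+ (~~ s (inord i)) * (if (i == 0)%N || (i == d) then 1 else eps)).

Lemma coef_sign_pattern_poly (R : nzRingType) d (s : 'I_d.+1 -> bool) (eps : R)
    (j : 'I_d.+1) :
  (sign_pattern_poly s eps)`_j =
    (-1) ^+ (~~ s j) * (if (j == 0 :> nat) || (j == d :> nat) then 1 else eps).
Proof. by rewrite coef_poly ltn_ord inord_val. Qed.

Lemma sign_pattern_polyP (R : realType) d (s : 'I_d.+1 -> bool) (eps : R) :
  0 < eps -> defines_sign_pattern s (sign_pattern_poly s eps).
Proof.
move=> eps_gt0; have coefP (j : 'I_d.+1) :
    (sign_pattern_poly s eps)`_j != 0 /\ (0 < (sign_pattern_poly s eps)`_j) = s j.
  have w_gt0 : 0 < (if (j == 0 :> nat) || (j == d :> nat) then 1 else eps :> R).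
    by case: ifP.
  rewrite coef_sign_pattern_poly pmulr_lgt0 // signr_gt0 negbK.
  by split=> //; rewrite mulf_eq0 signr_eq0 gt_eqF.
split=> //; rewrite size_poly_eq //.
by have [] := coefP ord_max; rewrite coef_poly ltnSn.
Qed.

Lemma small_middle_coefs_sign_pattern_poly (R : realType) n
    (s : 'I_n.+2 -> bool) (eps : R) :
  0 < eps -> s ord_max -> small_middle_coefs n eps (sign_pattern_poly s eps).
Proof.
move=> eps_gt0 s_max; have [size_P _] := sign_pattern_polyP s eps_gt0.
split=> // [|i lt_in].
  rewrite monicE lead_coefE size_P (coef_sign_pattern_poly _ _ ord_max) s_max /=.
  by rewrite eqxx mul1r.
have lt_i : (i.+1 < n.+2)%N by rewrite !ltnS ltnW.
have := coef_sign_pattern_poly s eps (Ordinal lt_i) => /= ->.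
by rewrite eqSS ltn_eqF // normrM normr_sign mul1r gtr0_norm.
Qed.

Theorem mainTheorem1 (R : realType) (d : nat) (s : 'I_d.+1 -> bool) :
  (1 <= d)%N -> s ord_max = true ->
  exists P : {poly R},
    if ~~ odd d then
      (if s ord0 then realizes s P 0 0 else realizes s P 1 1)
    else
      (if s ord0 then realizes s P 0 1 else realizes s P 1 0).
Proof.
case: d s => [|n] s // _ s_max.
pose eps : R := (n.+1%:R * 2 ^+ n.+2)^-1.
have eps_gt0 : 0 < eps by rewrite invr_gt0 mulr_gt0 ?exprn_gt0.
have eps_small : n.+1%:R * 2 ^+ n.+2 * eps <= 1 by rewrite mulfV ?gt_eqF // -invr_gt0.
pose P := sign_pattern_poly s eps.
have P_small := small_middle_coefs_sign_pattern_poly eps_gt0 s_max.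
have P0 : P`_0 = (-1) ^+ ~~ s ord0 by rewrite (coef_sign_pattern_poly _ _ ord0) mulr1.
have pos : num_pos_roots P (~~ s ord0).
  exact: num_pos_roots_small_middle (ltW eps_gt0) eps_small P_small P0.
have neg : num_neg_roots P (odd n.+1 (+) ~~ s ord0).
  apply/num_neg_roots_comp_polyNX/(@num_roots_inZ _ _ ((-1) ^+ n.+1)).
    by rewrite signr_eq0.
  apply: num_pos_roots_small_middle (ltW eps_gt0) eps_small
           (small_middle_coefs_reflect P_small) _.
  by rewrite coefZ coef_comp_polyNX mul1r P0 signr_addb signr_odd.
exists P; have P_sign := sign_pattern_polyP s eps_gt0.
by case: (s ord0) pos neg => /=; case: (odd n) => /= pos neg; split.
Qed.
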